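(* Let $\mathcal{V}$ be a non-trivial quantale, $\mathsf{F}\colon\mathbf{Set}\to\mathbf{Set}$ a functor, $\overline{\mathsf{F}}$ a lifting of $\mathsf{F}$ to $\mathbf{Cat}(\mathcal{V})$, and $\lambda$ a $\kappa$-ary $\mathcal{V}$-valued predicate lifting for $\mathsf{F}$. Then $\lambda$ is compatible with $\overline{\mathsf{F}}$ if and only if the map $\lambda_{|\mathcal{V}^\kappa|}(1_{|\mathcal{V}^\kappa|})\colon\mathsf{F}(|\mathcal{V}^\kappa|)\to|\mathcal{V}|$ is a $\mathcal{V}$-functor $\overline{\mathsf{F}}(\mathcal{V}^\kappa)\to\mathcal{V}$.
   Context: A quantale $(\mathcal{V},\otimes,k)$ is a complete lattice with commutative monoid structure, each $u\otimes-$ preserving joins, $\hom(u,-)$ its right adjoint; non-trivial: $\bot\ne\top$. $\mathcal{V}$-categories $(X,a)$: $k\le a(x,x)$, $a(x,y)\otimes a(y,z)\le a(x,z)$; $\mathcal{V}$-functors: $a(x,y)\le b(f x,f y)$; category $\mathbf{Cat}(\mathcal{V})$ with forgetful functor $|-|$. $\mathcal{V}$ denotes $(\mathcal{V},\hom)$ and $\mathcal{V}^\kappa$ the set of functions $\kappa\to\mathcal{V}$ with $[f,g]=\bigwedge_i\hom(f(i),g(i))$. A lifting of $\mathsf{F}$ is a functor $\overline{\mathsf{F}}$ on $\mathbf{Cat}(\mathcal{V})$ with $|\overline{\mathsf{F}}-|=\mathsf{F}|-|$. A $\kappa$-ary $\mathcal{V}$-valued predicate lifting is a natural transformation $\lambda\colon\mathbf{Set}(-,|\mathcal{V}^\kappa|)\to\mathbf{Set}(\mathsf{F}-,|\mathcal{V}|)$;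 it is compatible with $\overline{\mathsf{F}}$ if for every $\mathcal{V}$-category $X$ and every $\mathcal{V}$-functor $f\colon X\to\mathcal{V}^\kappa$, $\lambda_{|X|}(f)$ is a $\mathcal{V}$-functor $\overline{\mathsf{F}}X\to\mathcal{V}$. *)

Set Implicit Arguments.

Record Quantale := {
  qcar :> Type;
  qle : qcar -> qcar -> Prop;
  qle_refl : forall x, qle x x;
  qle_trans : forall x y z, qle x y -> qle y z -> qle x z;
  qle_antisym : forall x y, qle x y -> qle y x -> x = y;
  qsup : (qcar -> Prop) -> qcar;
  qsup_ub : forall (S : qcar -> Prop) x, S x -> qle x (qsup S);
  qsup_least : forall (S : qcar -> Prop) u, (forall x, S x -> qle x u) -> qle (qsup S) u;
  qten : qcar -> qcar -> qcar;
  qk : qcar;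
  qten_assoc : forall x y z, qten x (qten y z) = qten (qten x y) z;
  qten_comm : forall x y, qten x y = qten y x;
  qten_k : forall x, qten x qk = x;
  qten_sup : forall u (S : qcar -> Prop),
      qten u (qsup S) = qsup (fun y => exists x, S x /\ y = qten u x);
  qhom : qcar -> qcar -> qcar;
  qhom_adj : forall u v w, qle (qten u w) v <-> qle w (qhom u v)
}.

Definition qbot (V : Quantale) : V := qsup V (fun _ => False).
Definition qtop (V : Quantale) : V := qsup V (fun _ => True).
Definition qinf (V : Quantale) (S : V -> Prop) : V :=
  qsup V (fun x => forall y, S y -> qle V x y).

Lemma qinf_lb (V : Quantale) (S : V -> Prop) y : S y -> qle V (@qinf V S) y.
Proof. intros Hy. apply qsup_least. intros x Hx. now apply Hx. Qed.

Lemma qinf_greatest (V : Quantale) (S : V -> Prop) u :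
  (forall y, S y -> qle V u y) -> qle V u (@qinf V S).
Proof. intros H. now apply qsup_ub. Qed.

Lemma qten_monor (V : Quantale) (u w w' : V) :
  qle V w w' -> qle V (qten V u w) (qten V u w').
Proof.
  intros H. apply qhom_adj. eapply qle_trans; [exact H|].
  apply qhom_adj. apply qle_refl.
Qed.

Lemma qten_monol (V : Quantale) (u u' w : V) :
  qle V u u' -> qle V (qten V u w) (qten V u' w).
Proof. intros H. rewrite (qten_comm V u), (qten_comm V u'). now apply qten_monor. Qed.

Record isVCat (V : Quantale) (X : Type) (a : X -> X -> V) : Prop := {
  vc_refl : forall x, qle V (qk V) (a x x);
  vc_trans : forall x y z, qle V (qten V (a x y) (a y z)) (a x z)
}.

Record VCat (V : Quantale) := {
  vcar :> Type;
  vdist : vcar -> vcar -> V;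
  vaxioms : @isVCat V vcar vdist
}.

Definition is_Vfunctor (V : Quantale) (A B : Type) (a : A -> A -> V)
  (b : B -> B -> V) (f : A -> B) : Prop :=
  forall x y, qle V (a x y) (b (f x) (f y)).
Arguments is_Vfunctor {V A B} a b f.

Lemma hom_isVCat (V : Quantale) : @isVCat V V (qhom V).
Proof.
  split.
  - intros x. apply qhom_adj. rewrite qten_k. apply qle_refl.
  - intros x y z. apply (proj1 (qhom_adj V x z _)). rewrite qten_assoc.
    eapply qle_trans; [apply qten_monol; apply (proj2 (qhom_adj V x y _)); apply qle_refl|].
    apply (proj2 (qhom_adj V y z _)). apply qle_refl.
Qed.

Definition VSelf (V : Quantale) : VCat V :=
  {| vcar := qcar V; vdist := qhom V; vaxioms := hom_isVCat V |}.

Definition powdist (V : Quantale) (K : Type) (f g : K -> V) : V :=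
  @qinf V (fun v => exists i, v = qhom V (f i) (g i)).

Lemma pow_isVCat (V : Quantale) (K : Type) : @isVCat V (K -> V) (@powdist V K).
Proof.
  split.
  - intros f. apply qinf_greatest. intros y [i ->]. apply (vc_refl (hom_isVCat V)).
  - intros f g h. apply qinf_greatest. intros y [i ->].
    eapply qle_trans; [| apply (vc_trans (hom_isVCat V) (f i) (g i) (h i))].
    eapply qle_trans; [apply qten_monol; apply qinf_lb; now exists i|].
    apply qten_monor; apply qinf_lb; now exists i.
Qed.

Definition VPow (V : Quantale) (K : Type) : VCat V :=
  {| vcar := K -> qcar V; vdist := @powdist V K; vaxioms := pow_isVCat V K |}.

Record SetFunctor := {
  Fob : Type -> Type;
  Fmap : forall A B : Type, (A -> B) -> Fob A -> Fob B;
  Fmap_id : forall A (x : Fob A), Fmap (fun a : A => a) x = x;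
  Fmap_comp : forall A B C (f : A -> B) (g : B -> C) (x : Fob A),
      Fmap (fun a => g (f a)) x = Fmap g (Fmap f x)
}.

(* A lifting of F to Cat(V): each V-category X gets a V-category structure
   on F|X|, and for each V-functor f, F f is a V-functor (so |Fbar -| = F|-|,
   functor laws being inherited from F). *)
Record Lifting (V : Quantale) (F : SetFunctor) := {
  Ldist : forall X : VCat V, Fob F X -> Fob F X -> V;
  L_isVCat : forall X : VCat V, @isVCat V (Fob F X) (Ldist X);
  L_functor : forall (X Y : VCat V) (f : X -> Y),
      is_Vfunctor (vdist X) (vdist Y) f ->
      is_Vfunctor (Ldist X) (Ldist Y) (Fmap F f)
}.

Definition LiftObj (V : Quantale) (F : SetFunctor) (L : Lifting V F) (X : VCat V) : VCat V :=
  {| vcar := Fob F X; vdist := Ldist L X; vaxioms := L_isVCat L X |}.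

(* kappa-ary V-valued predicate lifting: natural transformation
   Set(-, |V^K|) => Set(F -, |V|); naturality for h : B -> A. *)
Record PredLifting (V : Quantale) (F : SetFunctor) (K : Type) := {
  plam : forall A : Type, (A -> (K -> V)) -> Fob F A -> V;
  plam_nat : forall (A B : Type) (h : B -> A) (f : A -> (K -> V)) (x : Fob F B),
      plam (fun b => f (h b)) x = plam f (Fmap F h x)
}.

Definition compatible (V : Quantale) (F : SetFunctor) (Fbar : Lifting V F) (K : Type)
  (lam : PredLifting V F K) : Prop :=
  forall (X : VCat V) (f : X -> (K -> V)),
    is_Vfunctor (vdist X) (vdist (VPow V K)) f ->
    is_Vfunctor (vdist (LiftObj Fbar X)) (vdist (VSelf V)) (plam lam f).


Set Implicit Arguments.

(* By naturality (Yoneda), [lam f = lam 1 \o F f] for every [f : X -> V^K].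
   When [f] is a V-functor so is [Fbar f = F f], hence compatibility reduces
   to the generic instance [lam 1]; the converse is the instance [f = 1]. *)

Lemma is_Vfunctor_id (V : Quantale) (A : Type) (a : A -> A -> V) :
  is_Vfunctor a a (fun x : A => x).
Proof. intros x y. apply qle_refl. Qed.

Lemma is_Vfunctor_comp (V : Quantale) (A B C : Type)
  (a : A -> A -> V) (b : B -> B -> V) (c : C -> C -> V) (f : A -> B) (g : B -> C) :
  is_Vfunctor a b f -> is_Vfunctor b c g -> is_Vfunctor a c (fun x => g (f x)).
Proof. intros Hf Hg x y. eapply qle_trans; [apply Hf | apply Hg]. Qed.

Lemma plam_generic (V : Quantale) (F : SetFunctor) (K : Type)
  (lam : PredLifting V F K) (A : Type) (f : A -> K -> V) (x : Fob F A) :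
  plam lam f x = plam lam (fun g : K -> V => g) (Fmap F f x).
Proof. exact (plam_nat lam f (fun g : K -> V => g) x). Qed.

Theorem proposition2 (V : Quantale) (Hnontriv : qbot V <> qtop V)
  (F : SetFunctor) (Fbar : Lifting V F) (K : Type) (lam : PredLifting V F K) :
  compatible Fbar lam <->
  is_Vfunctor (vdist (LiftObj Fbar (VPow V K))) (vdist (VSelf V))
    (plam lam (fun f : K -> V => f)).
Proof.
  split.
  - intros Hcompat. apply (Hcompat (VPow V K)). apply is_Vfunctor_id.
  - intros Hgeneric X f Hf x y.
    rewrite !(plam_generic lam f).
    exact (is_Vfunctor_comp (L_functor Fbar X (VPow V K) Hf) Hgeneric x y).
Qed.
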